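(* Let $q$ be a prime power and let $\{P_i\}$ be an infinite family of toric codes over $\mathbb{F}_q$, with $P_i\subseteq[0,q-2]^{n_i}$. If $\{L(P_i)\}$ is unbounded, then $\delta(P_i)\to0$ as $i\to\infty$.
   Context: For an integral convex polytope $P\subseteq[0,q-2]^n$: $\mathcal{L}_P=\mathrm{span}_{\mathbb{F}_q}\{x^p: p\in P\cap\mathbb{Z}^n\}$, $N(P)=\max_{0\neq f\in\mathcal{L}_P}|Z(f)|$ with $Z(f)$ the zero set of $f$ in $(\mathbb{F}_q^\times)^n$, $\delta(P)=\big((q-1)^n-N(P)\big)/(q-1)^n$, and $R(P)=|P\cap\mathbb{Z}^n|/(q-1)^n$. A sequence of nonempty integral convex polytopes $P_i\subseteq[0,q-2]^{n_i}$ is an infinite family of toric codes if $n_i\to\infty$ and $\delta(P_i)\to\delta$, $R(P_i)\to R$ for some $\delta,R\in[0,1]$. The Minkowski length $\ell(P)$ of a lattice polytope is the largest number of summands in a decomposition $P=P_1+\dots+P_\ell$ (Minkowski sum) into lattice polytopes of positive dimension ($\ell=0$ for a point); the full Minkowski length is $L(P)=\max\{\ell(Q):Q\subseteq P\text{ a lattice polytope}\}$. *)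

From HB Require Import structures.
From mathcomp Require Import all_boot all_order all_algebra.
From mathcomp Require Import all_classical all_reals all_analysis.
From mathcomp Require Import Rstruct Rstruct_topology.
From Stdlib Require Import ClassicalEpsilon.

Set Implicit Arguments.
Unset Strict Implicit.
Unset Printing Implicit Defensive.

Import Order.TTheory GRing.Theory Num.Theory.
Local Open Scope classical_set_scope.
Local Open Scope ring_scope.

Definition ptope (n : nat) := 'rV[rat]_n -> Prop.

Definition ratv n (v : 'rV[int]_n) : 'rV[rat]_n := map_mx (fun z : int => z%:~R) v.

Definition inconv n (V : seq 'rV[int]_n) (x : 'rV[rat]_n) : Prop :=
  exists w : 'I_(size V) -> rat,
    (forall i, 0 <= w i) /\ \sum_i w i = 1 /\
    x = \sum_i w i *: ratv (nth 0 V i).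

Definition lattice_polytope n (P : ptope n) : Prop :=
  exists V : seq 'rV[int]_n, V != [::] /\ forall x, P x <-> inconv V x.

Definition pos_dim n (P : ptope n) : Prop :=
  exists x y, P x /\ P y /\ x != y.

Fixpoint msum n (Ps : seq (ptope n)) : ptope n :=
  match Ps with
  | [::] => fun x => x = 0
  | P :: Ps' => fun x => exists y z, P y /\ msum Ps' z /\ x = y + z
  end.

Definition mink_decomp n (P : ptope n) (l : nat) : Prop :=
  exists Ps : seq (ptope n), size Ps = l /\
    (forall Q, List.In Q Ps -> lattice_polytope Q /\ pos_dim Q) /\
    (forall x, P x <-> msum Ps x).

(* Minkowski length: largest l with such a decomposition (0 for a point). *)
Definition is_mink_length n (P : ptope n) (m : nat) : Prop :=
  (m = 0%N \/ mink_decomp P m) /\ (forall l, mink_decomp P l -> (l <= m)%N).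

Definition mink_length n (P : ptope n) : nat :=
  epsilon (inhabits 0%N) (is_mink_length P).

Definition is_full_mink_length n (P : ptope n) (m : nat) : Prop :=
  (exists Q : ptope n, lattice_polytope Q /\ (forall x, Q x -> P x) /\
      mink_length Q = m) /\
  (forall Q : ptope n, lattice_polytope Q -> (forall x, Q x -> P x) ->
      (mink_length Q <= m)%N).

Definition full_mink_length n (P : ptope n) : nat :=
  epsilon (inhabits 0%N) (is_full_mink_length P).

Definition in_box (F : finFieldType) n (P : ptope n) : Prop :=
  forall x, P x -> forall j, 0 <= x 0 j /\ x 0 j <= (#|F| - 2)%N%:R.

(* integer points of [0,q-2]^n *)
Notation boxpt F n := {ffun 'I_n -> 'I_(#|F|.-1)}.

Definition boxv (F : finFieldType) n (y : boxpt F n) : 'rV[rat]_n :=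
  \row_j ((y j : nat)%:R).

(* P ∩ Z^n (for P inside the box) *)
Definition latpts (F : finFieldType) n (P : ptope n) : {set boxpt F n} :=
  [set y | `[< P (boxv y) >]].

(* the element f = sum_{p in P ∩ Z^n} c_p x^p of L_P, evaluated at x *)
Definition toric_eval (F : finFieldType) n (P : ptope n)
    (c : {ffun boxpt F n -> F}) (x : {ffun 'I_n -> F}) : F :=
  \sum_(y in latpts F P) c y * \prod_(j < n) x j ^+ (y j : nat).

Definition nzeros (F : finFieldType) n (P : ptope n) (c : {ffun boxpt F n -> F}) : nat :=
  #|[set x : {ffun 'I_n -> F} | [forall j, x j != 0] && (toric_eval P c x == 0)]|.

Definition Nmax (F : finFieldType) n (P : ptope n) : nat :=
  \max_(c : {ffun boxpt F n -> F} | [exists y in latpts F P, c y != 0]) nzeros P c.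

Definition delta (F : finFieldType) n (P : ptope n) : Rdefinitions.R :=
  (((#|F|.-1) ^ n)%N%:R - (Nmax F P)%:R) / ((#|F|.-1) ^ n)%N%:R.

Definition rate (F : finFieldType) n (P : ptope n) : Rdefinitions.R :=
  (#|latpts F P|)%:R / ((#|F|.-1) ^ n)%N%:R.

Definition toric_family (F : finFieldType) (n : nat -> nat)
    (P : forall i, ptope (n i)) : Prop :=
  (forall i, lattice_polytope (P i) /\ in_box F (P i)) /\
  (forall B : nat, exists N : nat, forall i, (N <= i)%N -> (B <= n i)%N) /\
  exists d r : Rdefinitions.R, (0 <= d <= 1) /\ (0 <= r <= 1) /\
    ((fun i => delta F (P i)) @ \oo --> d) /\
    ((fun i => rate F (P i)) @ \oo --> r).

(* If Q ⊆ P is a Minkowski sum Q_1 + ... + Q_m of lattice polytopes of positive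
   dimension, pick lattice points a_t != b_t in Q_t.  For every lam in the torus
   (F^x)^m the polynomial f_lam = prod_t (x^(a_t) - lam_t x^(b_t)) lies in L_P, and it
   is nonzero since the monomial maximising a generic linear form occurs only once.
   For fixed x, exactly (q-2)^m of the lam make f_lam(x) nonzero, so averaging gives a
   lam with at most (q-1)^n ((q-2)/(q-1))^m nonzeros, i.e.
   delta(P) <= ((q-2)/(q-1))^m.  Minkowski lengths inside [0,q-2]^n are bounded, so
   L(P_i) is attained by such a Q, and unbounded L(P_i) forces lim delta(P_i) = 0. *)

From Pilot Require Import Defs.
From mathcomp Require Import all_boot all_order all_algebra.
From mathcomp Require Import all_classical all_reals all_analysis.
From mathcomp Require Import Rstruct Rstruct_topology.
From mathcomp Require Import zify lra.
From Stdlib Require Import ClassicalEpsilon.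

Set Implicit Arguments.
Unset Strict Implicit.
Unset Printing Implicit Defensive.

Import Order.TTheory GRing.Theory Num.Theory.
Local Open Scope ring_scope.

Lemma Prop_ex_maxn (Pr : nat -> Prop) (D : nat) :
  (exists k, Pr k) -> (forall k, Pr k -> (k <= D)%N) ->
  exists2 m, Pr m & forall k, Pr k -> (k <= m)%N.
Proof.
move=> [k0 Pk0] le_D.
have exP : exists k, `[< Pr k >] by exists k0; apply/asboolP.
have ubP k : `[< Pr k >] -> (k <= D)%N by move/asboolP; apply: le_D.
case: (ex_maxnP exP ubP) => m /asboolP Pm max_m.
by exists m => // l Pl; apply/max_m/asboolP.
Qed.

Lemma In_nth T (x0 : T) (s : seq T) i : (i < size s)%N -> List.In (nth x0 s i) s.
Proof. by elim: s i => [|x s IHs] [|i] //= lt_i; [left | right; apply: IHs]. Qed.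

Lemma card_ffun_family m (T : finType) (A : 'I_m -> pred T) :
  #|[set f : {ffun 'I_m -> T} | [forall t, f t \in A t]]| = (\prod_(t < m) #|A t|)%N.
Proof.
rewrite -big_enum -[in RHS](big_map (fun k => #|A k|) xpredT id) -foldrE -card_family.
by apply: eq_card => f; rewrite inE.
Qed.

Lemma exists_le_average (T : finType) (A : {set T}) (f : T -> nat) (a0 : T) :
  a0 \in A -> exists2 a, a \in A & (f a * #|A| <= \sum_(x in A) f x)%N.
Proof.
move=> Aa0; have [a Aa min_a] := arg_minnP f Aa0; exists a => //.
by rewrite mulnC -sum_nat_const; apply: leq_sum.
Qed.

Definition choice_sum n l (a b : 'I_l -> 'rV[int]_n) (c : 'I_l -> bool) : 'rV[int]_n :=
  \sum_t (if c t then b t else a t).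

Lemma choice_sum_entry n l (a b : 'I_l -> 'rV[int]_n) c j :
  choice_sum a b c 0 j = \sum_t (if c t then b t 0 j else a t 0 j).
Proof. by rewrite summxE; apply: eq_bigr => t _; case: (c t). Qed.

Lemma ratv_sum n l (z : 'I_l -> 'rV[int]_n) : ratv (\sum_t z t) = \sum_t ratv (z t).
Proof.
by apply/rowP => j; rewrite !mxE !summxE rmorph_sum; apply: eq_bigr => t _; rewrite mxE.
Qed.

Lemma ratv_entry n (v : 'rV[int]_n) j : ratv v 0 j = (v 0 j)%:~R.
Proof. by rewrite mxE. Qed.

Lemma inconv_nth n (V : seq 'rV[int]_n) (i : 'I_(size V)) : inconv V (ratv (nth 0 V i)).
Proof.
exists (fun j => (j == i)%:R); split; first by move=> j; rewrite ler0n.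
split; rewrite (bigD1 i) //= eqxx ?scale1r big1 ?addr0 //.
all: by move=> j /negbTE ->; rewrite ?scale0r.
Qed.

Lemma lattice_polytope_two_points n (Q : ptope n) :
  lattice_polytope Q -> pos_dim Q ->
  exists a b : 'rV[int]_n, [/\ a != b, Q (ratv a) & Q (ratv b)].
Proof.
move=> [V [V0 QV]] [x [y [Qx [Qy xy]]]].
case: (classic (exists i j : 'I_(size V), nth 0 V i != nth 0 V j)) => [[i [j Vij]]|].
  by exists (nth 0 V i), (nth 0 V j); split => //; apply/QV; apply: inconv_nth.
move=> all_eq; have V0_gt0 : (0 < size V)%N by rewrite lt0n size_eq0.
have Q1 z : Q z -> z = ratv (nth 0 V 0).
  move=> /QV [w [_ [w1 ->]]].
  rewrite (eq_bigr (fun j => w j *: ratv (nth 0 V 0))) -?scaler_suml ?w1 ?scale1r //.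
  move=> j _; case: (eqVneq (nth 0 V j) (nth 0 V 0)) => [-> //|Vj].
  by case: all_eq; exists j, (Ordinal V0_gt0).
by move: xy; rewrite (Q1 _ Qx) (Q1 _ Qy) eqxx.
Qed.

Lemma msum_nth_sum n l (Ps : seq (ptope n)) (x : 'I_l -> 'rV[rat]_n) :
  size Ps = l -> (forall t : 'I_l, nth (fun _ => False) Ps t (x t)) ->
  Defs.msum Ps (\sum_t x t).
Proof.
elim: Ps l x => [|Q Ps IHPs] [|l] //= x; first by rewrite big_ord0.
case=> size_Ps Px.
exists (x ord0), (\sum_(t < l) x (lift ord0 t)); split; first exact: (Px ord0).
by split; [apply: IHPs => // t; apply: (Px (lift ord0 t)) | rewrite big_ord_recl].
Qed.

(* This combinatorial [l]-cube of choice sums is all the argument uses of a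
   decomposition. *)
Lemma mink_decomp_choice_sums n (Q : ptope n) l : mink_decomp Q l ->
  exists a b : 'I_l -> 'rV[int]_n,
    (forall t, a t != b t) /\ forall c, Q (ratv (choice_sum a b c)).
Proof.
move=> [Ps [size_Ps [Ps_pos QPs]]].
pose nthP (t : 'I_l) := nth (fun _ => False) Ps t.
have two_pts t : exists ab : 'rV[int]_n * 'rV[int]_n,
    [/\ ab.1 != ab.2, nthP t (ratv ab.1) & nthP t (ratv ab.2)].
  have lt_t : (t < size Ps)%N by rewrite size_Ps.
  have [lat pos] := Ps_pos _ (In_nth (fun _ => False) lt_t).
  by have [a [b ?]] := lattice_polytope_two_points lat pos; exists (a, b).
have [ab ab_pts] := fin_all_exists two_pts.
exists (fun t => (ab t).1), (fun t => (ab t).2); split=> [t|c].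
  by case: (ab_pts t).
apply/QPs; rewrite ratv_sum; apply: msum_nth_sum => // t.
by case: (ab_pts t) => _ ? ?; case: (c t).
Qed.

(* Choosing the larger, resp. the smaller, entry in every position gives two sums
   that differ by [\sum_t `|u t - v t|]. *)
Lemma count_neq_le_choice_range l (u v : 'I_l -> int) (K : nat) :
  (forall c : 'I_l -> bool, 0 <= \sum_t (if c t then v t else u t) <= K%:Z) ->
  (\sum_t (u t != v t) <= K)%N.
Proof.
move=> range.
pose csum (c : 'I_l -> bool) := \sum_t (if c t then v t else u t).
have /andP[_ max_le] := range (fun t => u t < v t).
have /andP[min_ge0 _] := range (fun t => ~~ (u t < v t)).
rewrite -lez_nat -natz natr_sum.
apply: (le_trans (y := csum (fun t => u t < v t) - csum (fun t => ~~ (u t < v t)))).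
  rewrite -sumrB; apply: ler_sum => t _; rewrite natz.
  by case: ltgtP => [uv|vu|->] /=; rewrite ?subrr //; lia.
by apply: le_trans max_le; rewrite lerBlDr lerDl.
Qed.

(* [in_box F P] is convertible to [in_cube P (#|F| - 2)]. *)
Definition in_cube n (Q : ptope n) (K : nat) : Prop :=
  forall x, Q x -> forall j, 0 <= x 0 j /\ x 0 j <= K%:R.

Lemma mink_decomp_le n (Q : ptope n) K l : in_cube Q K -> mink_decomp Q l -> (l <= n * K)%N.
Proof.
move=> QK /mink_decomp_choice_sums [a [b [ab Qab]]].
have coord_count (j : 'I_n) : (\sum_t (a t 0%R j != b t 0%R j) <= K)%N.
  apply: count_neq_le_choice_range => c; rewrite -choice_sum_entry.
  have [] := QK _ (Qab c) j; rewrite ratv_entry ler0z => -> /=.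
  by rewrite -[K%:R]/((K%:Z)%:~R : rat) ler_int.
have diff_coord t : exists j, a t 0 j != b t 0 j.
  apply/existsP; apply: contraR (ab t) => /existsPn eq_ab.
  by apply/eqP/rowP => j; apply/eqP; have := eq_ab j; rewrite negbK.
apply: (@leq_trans (\sum_t \sum_j (a t 0%R j != b t 0%R j))).
  rewrite -[X in (X <= _)%N]card_ord -sum1_card; apply: leq_sum => t _.
  by have [j ab_j] := diff_coord t; rewrite (bigD1 j) //= ab_j.
rewrite exchange_big -[n in (n * K)%N]card_ord -sum_nat_const.
by apply: leq_sum => j _; apply: coord_count.
Qed.

Lemma mink_lengthP n (Q : ptope n) K : in_cube Q K -> is_mink_length Q (mink_length Q).
Proof.
move=> QK; apply: epsilon_spec.
have [|l [->|/(mink_decomp_le QK)] //|m Pm max_m] :=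
  @Prop_ex_maxn (fun l => l = 0%N \/ mink_decomp Q l) (n * K); first by exists 0%N; left.
by exists m; split => // l dl; apply: max_m; right.
Qed.

Lemma mink_length_le n (Q : ptope n) K : in_cube Q K -> (mink_length Q <= n * K)%N.
Proof.
by move=> QK; have [[->//|dQ] _] := mink_lengthP QK; apply: mink_decomp_le QK dQ.
Qed.

Lemma full_mink_lengthP n (P : ptope n) K :
  lattice_polytope P -> in_cube P K -> is_full_mink_length P (full_mink_length P).
Proof.
move=> latP PK; apply: epsilon_spec.
have [|_ [Q [_ [QP <-]]]|m [Q [latQ [QP LQ]]] max_m] := @Prop_ex_maxn
    (fun m => exists Q, lattice_polytope Q /\ (forall x, Q x -> P x) /\ mink_length Q = m)
    (n * K).
- by exists (mink_length P), P.
- by apply: (@mink_length_le n Q K) => x /QP; apply: PK.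
- exists m; split; first by exists Q.
  by move=> Q' latQ' Q'P; apply: max_m; exists Q'.
Qed.

Lemma full_mink_length_decomp n (P : ptope n) K :
  lattice_polytope P -> in_cube P K -> (0 < full_mink_length P)%N ->
  exists2 Q : ptope n, (forall x, Q x -> P x) & mink_decomp Q (full_mink_length P).
Proof.
move=> latP PK L_gt0; have [[Q [_ [QP LQ]]] _] := full_mink_lengthP latP PK.
have QK : in_cube Q K by move=> x /QP; apply: PK.
have [[L0|dQ] _] := mink_lengthP QK.
  by move: L_gt0; rewrite -LQ L0.
by exists Q => //; rewrite -LQ.
Qed.

Lemma exists_nonroot (R : numDomainType) (p : {poly R}) : p != 0 -> exists x, ~~ root p x.
Proof.
move=> p_neq0; apply: contrapT => all_roots.
have rootp x : root p x by apply: contrapT => /negP nroot; apply: all_roots; exists x.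
pose rs := [seq i%:R : R | i <- iota 0 (size p)].
have rs_uniq : uniq rs.
  by rewrite map_inj_uniq ?iota_uniq // => i j /eqP; rewrite eqr_nat => /eqP.
have := max_poly_roots p_neq0 (introT allP (fun x _ => rootp x)) rs_uniq.
by rewrite size_map size_iota ltnn.
Qed.

Definition lin_form n (s : rat) (z : 'rV[int]_n) : rat := \sum_j (z 0 j)%:~R * s ^+ j.

Definition lin_form_poly n (z : 'rV[int]_n) : {poly rat} := \sum_j (z 0 j)%:~R *: 'X^j.

Lemma horner_lin_form_poly n (z : 'rV[int]_n) s : (lin_form_poly z).[s] = lin_form s z.
Proof.
by rewrite horner_sum; apply: eq_bigr => j _; rewrite hornerZ hornerXn.
Qed.

Lemma lin_form_poly_eq0 n (z : 'rV[int]_n) : (lin_form_poly z == 0) = (z == 0).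
Proof.
apply/eqP/eqP => [/polyP z0|->]; last first.
  by rewrite /lin_form_poly big1 // => j _; rewrite mxE scale0r.
apply/rowP => j.
have := z0 j; rewrite coef_sum coef0 (bigD1 j) //= coefZ coefXn eqxx mulr1 big1.
  by rewrite addr0 mxE => /eqP; rewrite intr_eq0 => /eqP.
move=> i ij; rewrite coefZ coefXn (_ : (j == i :> nat) = false) ?mulr0 //.
by apply/negbTE; rewrite eq_sym.
Qed.

Lemma lin_formB n s (z1 z2 : 'rV[int]_n) : lin_form s (z1 - z2) = lin_form s z1 - lin_form s z2.
Proof. by rewrite -sumrB; apply: eq_bigr => j _; rewrite !mxE intrB mulrBl. Qed.

Lemma lin_form_sum n l s (z : 'I_l -> 'rV[int]_n) :
  lin_form s (\sum_t z t) = \sum_t lin_form s (z t).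
Proof.
rewrite /lin_form exchange_big /=; apply: eq_bigr => j _.
by rewrite summxE rmorph_sum mulr_suml.
Qed.

Lemma exists_separating_lin_form n l (a b : 'I_l -> 'rV[int]_n) :
  (forall t, a t != b t) -> exists s, forall t, lin_form s (a t) != lin_form s (b t).
Proof.
move=> ab; have [|s] := @exists_nonroot _ (\prod_t lin_form_poly (a t - b t)).
  by apply/prodf_neq0 => t _; rewrite lin_form_poly_eq0 subr_eq0.
rewrite /root horner_prod => /prodf_neq0 sep; exists s => t.
by have := sep t isT; rewrite horner_lin_form_poly lin_formB subr_eq0.
Qed.

Lemma lin_form_choice_sum_lt n l s (a b : 'I_l -> 'rV[int]_n) (c : {ffun 'I_l -> bool}) :
  let c0 := [ffun t => lin_form s (a t) < lin_form s (b t)] in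
  (forall t, lin_form s (a t) != lin_form s (b t)) -> c != c0 ->
  lin_form s (choice_sum a b c) < lin_form s (choice_sum a b c0).
Proof.
move=> c0 sep c_neq.
have [t ct] : exists t, c t != c0 t.
  apply/existsP; apply: contraR c_neq => /existsPn c_eq.
  by apply/eqP/ffunP => t; apply/eqP/negPn/c_eq.
have pick_le i (d : bool) :
    lin_form s (if d then b i else a i) <= lin_form s (if c0 i then b i else a i).
  by rewrite ffunE; case: d; case: ltrP => // /ltW.
rewrite /choice_sum !lin_form_sum (bigD1 t) //= [X in _ < X](bigD1 t) //=.
apply: ltr_leD; last by apply: ler_sum => i _; apply: pick_le.
rewrite lt_neqAle pick_le andbT; move: ct; rewrite ffunE.
by case: (c t); case: ltrP => //= _ _; rewrite ?(sep t) // eq_sym sep.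
Qed.

Definition torus (F : finFieldType) m : {set {ffun 'I_m -> F}} :=
  [set x : {ffun 'I_m -> F} | [forall j, x j != 0]].

Lemma card_torus (F : finFieldType) m : #|torus F m| = (#|F|.-1 ^ m)%N.
Proof.
rewrite -(cardC1 (0 : F)) -[m in (_ ^ m)%N]card_ord -prod_nat_const -card_ffun_family.
by apply: eq_card => x; rewrite !inE.
Qed.

Lemma nzeros_torus (F : finFieldType) n (P : ptope n) c :
  nzeros P c = #|[set x in torus F n | toric_eval P c x == 0]|.
Proof. by apply: eq_card => x; rewrite !inE; apply/idP/idP; rewrite in_setE. Qed.

Lemma card_sep_sum (T : finType) (A : {set T}) (p : pred T) :
  #|[set x in A | p x]| = (\sum_(x in A) p x)%N.
Proof.
rewrite -sum1_card (eq_bigl (fun x => (x \in A) && p x)) => [|x]; last by rewrite inE.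
by rewrite -big_mkcondr /=; apply: eq_bigr => x _; case: (p x).
Qed.

Lemma card_neq0_neq (F : finFieldType) (w : F) : w != 0 ->
  #|[pred v : F | (v != 0) && (v != w)]| = #|F|.-2.
Proof.
move=> w_neq0; have := cardD1 w (predC1 0); rewrite cardC1 inE /= w_neq0 add1n => ->.
by apply: eq_card => v; rewrite !inE andbC.
Qed.

(* Averaging over [lam] in the torus: for each [x], exactly [(q - 2) ^ m] of the
   [lam] avoid all the nonzero values [u x t]. *)
Lemma exists_torus_avoiding_rarely (F : finFieldType) (X : finType) (A : {set X}) m
    (u : X -> 'I_m -> F) :
  (forall x, x \in A -> forall t, u x t != 0) ->
  exists2 lam, lam \in torus F m &
    (#|[set x in A | [forall t, lam t != u x t]]| * #|F|.-1 ^ m <= #|A| * #|F|.-2 ^ m)%N.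
Proof.
move=> u_neq0.
have one_torus : [ffun=> 1] \in torus F m.
  by rewrite inE; apply/forallP => t; rewrite ffunE oner_neq0.
have [lam lam_torus] := exists_le_average
  (fun lam : {ffun 'I_m -> F} => #|[set x in A | [forall t, lam t != u x t]]|) one_torus.
rewrite card_torus => avg; exists lam => //; apply: leq_trans avg _.
under eq_bigr do rewrite card_sep_sum.
rewrite exchange_big /= -sum_nat_const; apply/leq_sum => x Ax.
rewrite -card_sep_sum -[m in (_ ^ m)%N]card_ord -prod_nat_const.
under eq_bigr => t _ do rewrite -(card_neq0_neq (u_neq0 x Ax t)).
rewrite -card_ffun_family; apply/eq_leq/eq_card => lam'; rewrite !inE.
apply/andP/forallP => [[/forallP nz /forallP av] t|all_t]; first by rewrite inE /= nz av.
by split; apply/forallP => t; have /andP[] := all_t t.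
Qed.

Definition laurent_mon (F : fieldType) n (x : {ffun 'I_n -> F}) (z : 'rV[int]_n) : F :=
  \prod_j x j ^ (z 0 j).

Lemma laurent_mon_neq0 (F : fieldType) n (x : {ffun 'I_n -> F}) z :
  (forall j, x j != 0) -> laurent_mon x z != 0.
Proof. by move=> x_neq0; apply/prodf_neq0 => j _; apply: expfz_neq0. Qed.

Lemma laurent_mon_sum (F : fieldType) n (x : {ffun 'I_n -> F}) l (z : 'I_l -> 'rV[int]_n) :
  (forall j, x j != 0) -> laurent_mon x (\sum_t z t) = \prod_t laurent_mon x (z t).
Proof.
move=> x_neq0; rewrite /laurent_mon exchange_big /=; apply: eq_bigr => j _.
rewrite summxE; elim/big_rec2: _ => [|t e1 e2 _ <-]; first by rewrite expr0z.
by rewrite exprzDr // unitfE.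
Qed.

Lemma laurent_mon_nat (F : fieldType) n (x : {ffun 'I_n -> F}) (y : 'I_n -> nat)
    (z : 'rV[int]_n) :
  (forall j, (y j)%:Z = z 0 j) -> \prod_j x j ^+ y j = laurent_mon x z.
Proof. by move=> yz; apply: eq_bigr => j _; rewrite -yz exprnP. Qed.

Lemma subr_mul_eq0 (F : fieldType) (A B l : F) : B != 0 -> (A - l * B == 0) = (l == A / B).
Proof.
move=> B_neq0; rewrite subr_eq0 eq_sym -(divfK B_neq0 A) (inj_eq (mulIf B_neq0)).
by rewrite divfK.
Qed.

Lemma ratv_inj n : injective (@ratv n).
Proof.
move=> u v /rowP uv; apply/rowP => j; have := uv j.
by rewrite !ratv_entry => /intr_inj.
Qed.

Lemma boxv_inj (F : finFieldType) n : injective (@boxv F n).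
Proof.
move=> y1 y2 /rowP y12; apply/ffunP => j; apply: val_inj.
by have /eqP := y12 j; rewrite !mxE eqr_nat => /eqP.
Qed.

Lemma finField_card_pred_gt0 (F : finFieldType) : (0 < #|F|.-1)%N.
Proof. by have := card_finNzRing_gt1 F; case: #|F| => [|[|]]. Qed.

Section ProductCode.

Variables (F : finFieldType) (n m : nat) (P : ptope n) (a b : 'I_m -> 'rV[int]_n).
Hypothesis P_box : in_box F P.
Hypothesis P_choice_sums : forall c : 'I_m -> bool, P (ratv (choice_sum a b c)).
Hypothesis ab_neq : forall t, a t != b t.

Lemma choice_sum_box c j :
  0 <= choice_sum a b c 0 j /\ (absz (choice_sum a b c 0%R j) < #|F|.-1)%N.
Proof.
have [] := P_box (P_choice_sums c) j; rewrite ratv_entry ler0z => ge0.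
rewrite -[(_ - _)%N%:R]/(((#|F| - 2)%N%:Z)%:~R : rat) ler_int => le_q2; split => //.
rewrite -ltz_nat gez0_abs //; apply: le_lt_trans le_q2 _.
by rewrite ltz_nat subn2; case: #|F| (card_finNzRing_gt1 F) => [|[|k]].
Qed.

Definition boxpt_of (z : 'rV[int]_n) : boxpt F n :=
  [ffun j => insubd (Ordinal (finField_card_pred_gt0 F)) (absz (z 0 j))].

Lemma boxpt_of_choice_sum c j :
  (boxpt_of (choice_sum a b c) j : nat)%:Z = choice_sum a b c 0 j.
Proof.
have [ge0 lt_q1] := choice_sum_box c j.
by rewrite ffunE val_insubd lt_q1 gez0_abs.
Qed.

Lemma boxv_boxpt_of c : boxv (boxpt_of (choice_sum a b c)) = ratv (choice_sum a b c).
Proof. by apply/rowP => j; rewrite ratv_entry -boxpt_of_choice_sum mxE. Qed.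

Lemma boxpt_of_in_latpts c : boxpt_of (choice_sum a b c) \in latpts F P.
Proof. by rewrite inE; apply/asboolP; rewrite boxv_boxpt_of. Qed.

(* The coefficient of [x ^ y] in [\prod_t (x ^ a t - lam t * x ^ b t)]. *)
Definition prod_coef (lam : {ffun 'I_m -> F}) : {ffun boxpt F n -> F} :=
  [ffun y => \sum_(c : {ffun 'I_m -> bool} | boxv y == ratv (choice_sum a b c))
               \prod_t (if c t then - lam t else 1)].

Lemma toric_eval_prod_coef lam x : x \in torus F n ->
  toric_eval P (prod_coef lam) x =
  \prod_t (laurent_mon x (a t) - lam t * laurent_mon x (b t)).
Proof.
rewrite inE => /forallP x_neq0; rewrite /toric_eval /prod_coef.
rewrite (eq_bigr (fun y : boxpt F n =>
    \sum_(c : {ffun 'I_m -> bool} | boxv y == ratv (choice_sum a b c))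
      (\prod_t (if c t then - lam t else 1)) * \prod_j x j ^+ y j)) => [|y _]; last first.
  by rewrite ffunE big_distrl.
rewrite (exchange_big_dep xpredT) //=.
transitivity (\sum_(c : {ffun 'I_m -> bool})
    (\prod_t (if c t then - lam t else 1)) * laurent_mon x (choice_sum a b c)).
  apply: eq_bigr => c _; rewrite (big_pred1 (boxpt_of (choice_sum a b c))) => [|y /=].
    by congr (_ * _); apply: laurent_mon_nat => j; apply: boxpt_of_choice_sum.
  rewrite -boxv_boxpt_of (inj_eq (@boxv_inj F n)).
  by case: eqP => [->|]; rewrite ?boxpt_of_in_latpts ?andbF.
transitivity (\prod_t \sum_(d : bool)
    (if d then - lam t * laurent_mon x (b t) else laurent_mon x (a t))).
  rewrite bigA_distr_bigA; apply: eq_bigr => c _.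
  rewrite laurent_mon_sum // -big_split; apply: eq_bigr => t _ /=.
  by case: (c t); rewrite ?mul1r ?mulNr.
by apply: eq_bigr => t _; rewrite big_bool /= addrC mulNr.
Qed.

(* The monomial of the choice maximising a separating linear form occurs only once. *)
Lemma prod_coef_neq0 lam :
  lam \in torus F m -> [exists y in latpts F P, prod_coef lam y != 0].
Proof.
rewrite inE => /forallP lam_neq0.
have [s sep] := exists_separating_lin_form ab_neq.
set c0 := [ffun t => lin_form s (a t) < lin_form s (b t)].
apply/existsP; exists (boxpt_of (choice_sum a b c0)); rewrite boxpt_of_in_latpts ffunE /=.
rewrite (big_pred1 c0) => [|c /=].
  by apply/prodf_neq0 => t _; case: ifP; rewrite ?oppr_eq0 ?oner_neq0.
rewrite boxv_boxpt_of (inj_eq (@ratv_inj n)) eq_sym.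
case: (eqVneq c c0) => [->|c_neq]; first by rewrite eqxx.
apply/negbTE/eqP => cs_eq; have := lin_form_choice_sum_lt sep c_neq.
by rewrite cs_eq ltxx.
Qed.

Lemma toric_eval_prod_coef_neq0 lam x : x \in torus F n ->
  (toric_eval P (prod_coef lam) x != 0) =
  [forall t, lam t != laurent_mon x (a t) / laurent_mon x (b t)].
Proof.
move=> x_torus; have := x_torus; rewrite inE => /forallP x_neq0.
rewrite toric_eval_prod_coef //; apply/prodf_neq0/forallP => [nz t|all_t t _].
  by move: (nz t isT); rewrite subr_mul_eq0 ?laurent_mon_neq0.
by move: (all_t t); rewrite subr_mul_eq0 ?laurent_mon_neq0.
Qed.

Lemma Nmax_lower_bound :
  (#|F|.-1 ^ n * #|F|.-1 ^ m <= Nmax F P * #|F|.-1 ^ m + #|F|.-1 ^ n * #|F|.-2 ^ m)%N.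
Proof.
pose u (x : {ffun 'I_n -> F}) t := laurent_mon x (a t) / laurent_mon x (b t).
have u_neq0 x : x \in torus F n -> forall t, u x t != 0.
  by rewrite inE => /forallP x_neq0 t; rewrite mulf_neq0 ?invr_eq0 ?laurent_mon_neq0.
have [lam lam_torus] := exists_torus_avoiding_rarely u_neq0.
rewrite card_torus => few.
have zeros_le : (nzeros P (prod_coef lam) <= Nmax F P)%N.
  by apply: leq_bigmax_cond; apply: prod_coef_neq0.
have zeros_add : (nzeros P (prod_coef lam) +
    #|[set x in torus F n | [forall t, lam t != u x t]]| = #|F|.-1 ^ n)%N.
  rewrite nzeros_torus !card_sep_sum -big_split -card_torus -sum1_card.
  by apply: eq_bigr => x x_torus; rewrite -toric_eval_prod_coef_neq0 //; case: eqP.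
by rewrite -{1}zeros_add mulnDl leq_add // leq_mul2r zeros_le orbT.
Qed.

End ProductCode.

Lemma delta_le_mink_decomp (F : finFieldType) n (P Q : ptope n) m :
  in_box F P -> (forall x, Q x -> P x) -> mink_decomp Q m ->
  delta F P <= (#|F|.-2%:R / #|F|.-1%:R) ^+ m.
Proof.
move=> P_box QP /mink_decomp_choice_sums [a [b [ab Qab]]].
have := Nmax_lower_bound P_box (fun c => QP _ (Qab c)) ab.
have := finField_card_pred_gt0 F.
set N := #|F|.-1; set Z := Nmax F P => N_gt0 bound.
have Nn_gt0 : 0 < (N ^ n)%:R :> Rdefinitions.R by rewrite ltr0n expn_gt0 N_gt0.
have Nm_gt0 : 0 < (N ^ m)%:R :> Rdefinitions.R by rewrite ltr0n expn_gt0 N_gt0.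
rewrite /delta -/N -/Z expr_div_n -!natrX ler_pdivrMr // mulrAC ler_pdivlMr //.
move: bound; rewrite -(ler_nat Rdefinitions.R) !natrD !natrM; nra.
Qed.

Lemma unbounded_after (f : nat -> nat) :
  (forall B, exists i, (B <= f i)%N) -> forall B N0, exists2 i, (N0 <= i)%N & (B <= f i)%N.
Proof.
move=> f_unb B N0; have [i] := f_unb (maxn B (\max_(k < N0) f k).+1).
rewrite geq_max => /andP[B_le max_lt]; exists i => //; rewrite leqNgt.
apply/negP => lt_i; move: max_lt; rewrite ltnNge => /negP; apply.
exact: (@leq_bigmax _ (fun k : 'I_N0 => f k) (Ordinal lt_i)).
Qed.

Import numFieldNormedType.Exports.
Local Open Scope classical_set_scope.

Lemma cvg_le_frequently (R : realFieldType) (u : nat -> R) (d c : R) :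
  u @ \oo --> d -> (forall N0, exists2 i, (N0 <= i)%N & u i <= c) -> d <= c.
Proof.
move=> ud freq; rewrite leNgt; apply/negP => cd.
have [N0 _ gt_c] := cvgr_gt d ud c cd.
have [i le_i le_c] := freq N0.
by have := gt_c i le_i; rewrite ltNge le_c.
Qed.

Lemma le0_of_le_expr (R : archiRealFieldType) (d rho : R) :
  0 <= rho -> rho < 1 -> (forall B, d <= rho ^+ B) -> d <= 0.
Proof.
move=> rho_ge0 rho_lt1 d_le.
have rho_cvg : (fun B => rho ^+ B) @ \oo --> 0 by apply: cvg_expr; rewrite ger0_norm.
by apply: (closed_cvg _ (@closed_ge _ d) _ _ rho_cvg); apply: nearW.
Qed.

Theorem mainTheorem14 (F : finFieldType) (n : nat -> nat)
    (P : forall i, ptope (n i)) :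
  toric_family F P ->
  (forall B : nat, exists i, (B <= full_mink_length (P i))%N) ->
  (fun i => delta F (P i)) @ \oo --> (0 : Rdefinitions.R).
Proof.
move=> [fam [_ [d [_ [/andP[d_ge0 _] [_ [delta_d _]]]]]]] L_unb.
set rho : Rdefinitions.R := #|F|.-2%:R / #|F|.-1%:R.
have q1_gt0 := finField_card_pred_gt0 F.
have rho_ge0 : 0 <= rho by rewrite divr_ge0.
have rho_lt1 : rho < 1 by rewrite ltr_pdivrMr ?mul1r ?ltr_nat ?ltr0n // prednK.
suff d0 : d = 0 by rewrite -d0.
apply/eqP; rewrite eq_le d_ge0 andbT; apply: (le0_of_le_expr rho_ge0 rho_lt1) => B.
apply: (cvg_le_frequently delta_d) => N0.
have [i le_N0 le_BL] := unbounded_after L_unb B.+1 N0.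
have [latP boxP] := fam i.
have [Q QP dQ] := full_mink_length_decomp latP (boxP : in_cube _ (#|F| - 2))
  (leq_ltn_trans (leq0n B) le_BL).
exists i => //; apply: le_trans (delta_le_mink_decomp boxP QP dQ) _.
by apply: ler_wiXn2l => //; [apply: ltW | apply: ltnW].
Qed.
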